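(* Let $n\geq2$ be an integer, and let $f:[0,\infty)\to[0,\infty)$ be a continuous, log-concave function, $C^2$-smooth on $(0,\infty)$, with $0<\int_0^\infty f<\infty$. Then for $0\leq\varepsilon\leq1$, $$ \int_{t_n(f)(1-\varepsilon)}^{t_n(f)(1+\varepsilon)}t^{n-1}f(t)\,dt\geq\left(1-Ce^{-c\varepsilon^2n}\right)\int_0^\infty t^{n-1}f(t)\,dt, $$ where $C>1$ and $0<c<1$ are universal constants.
   Context: For such $f$ and $p>1$, $t_p(f)$ denotes the unique $t>0$ with $f(t)>0$ and $f'(t)/f(t)=-(p-1)/t$ (existence and uniqueness hold under the stated assumptions). Log-concave: $f(\lambda x+(1-\lambda)y)\geq f(x)^\lambda f(y)^{1-\lambda}$. *)

From HB Require Import structures.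
From mathcomp Require Import all_boot all_order all_algebra.
From mathcomp Require Import all_classical all_reals all_analysis.
Set Implicit Arguments. Unset Strict Implicit. Unset Printing Implicit Defensive.
Import Order.TTheory GRing.Theory Num.Theory.
Import numFieldNormedType.Exports.
Local Open Scope classical_set_scope.
Local Open Scope ring_scope.

Definition log_concave_on_nonneg (R : realType) (f : R -> R) : Prop :=
  forall x y l : R, 0 <= x -> 0 <= y -> 0 <= l -> l <= 1 ->
    f x `^ l * f y `^ (1 - l) <= f (l * x + (1 - l) * y).

Definition is_t_p (R : realType) (p : R) (f : R -> R) (t : R) : Prop :=
  0 < t /\ 0 < f t /\ derive1 f t / f t = - (p - 1) / t.

From HB Require Import structures.
From mathcomp Require Import all_boot all_order all_algebra.
From mathcomp Require Import all_classical all_reals all_analysis.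
From mathcomp Require Import measurable_realfun ring lra.
Set Implicit Arguments. Unset Strict Implicit. Unset Printing Implicit Defensive.
Import Order.TTheory GRing.Theory Num.Theory.
Import numFieldNormedType.Exports.
Local Open Scope classical_set_scope.
Local Open Scope ring_scope.

(* Put k = n - 1, t = t_n(f) and g x = x^k f x.  At t the concave function ln f has a
   tangent of slope -k/t, so f x <= f t exp (-k (x - t) / t); combined with log-concavity at
   the midpoint m x = (x + t) / 2 this gives f x <= f (m x) exp (-k (x - t) / (2 t)).  An
   elementary estimate turns this into g x <= exp (-k eps^2 / 16) g (m x) whenever
   |x - t| >= eps t.  The map m sends [0, oo) into itself with Jacobian 1/2, so the mass of g
   outside [t (1 - eps), t (1 + eps)] is at most 2 exp (-k eps^2 / 16) times the total mass,
   which is finite by the tangent bound.  Since k >= n / 2 one can take C = 2 and c = 1/32. *)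

Section elementary_inequalities.
Variable R : realType.

Lemma mulr_expR1B_le1 (s : R) : s * expR (1 - s) <= 1.
Proof.
have le_s := expR_ge1Dx (s - 1).
have inv : expR (1 - s) * expR (s - 1) = 1 by rewrite -expRD [_ + _](_ : _ = 0) ?expR0 //; ring.
have := expR_gt0 (1 - s); nra.
Qed.

Lemma ler_expR_half (s : R) : 0 <= s -> s <= expR (s / 2).
Proof.
move=> s0; have sq : (1 + s / 4) ^+ 2 <= expR (s / 4) ^+ 2.
  by apply: lerXn2r; rewrite ?nnegrE ?expR_ge0 ?expR_ge1Dx //; lra.
rewrite -expRM_natl (_ : 2%:R * (s / 4) = s / 2) in sq; last by field.
apply: le_trans sq; have := sqr_ge0 (1 - s / 4); rewrite !expr2; nra.
Qed.

Lemma window_contraction (eps r : R) : 0 <= eps <= 1 -> -1 <= r -> eps <= `|r| ->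
  (1 + r) * expR (- (r / 2)) <= expR (- (eps ^+ 2 / 16)) * (1 + r / 2).
Proof.
move=> /andP[e0 e1] r1 er; set d := eps ^+ 2 / 16.
have d_le_r2 : 16 * d <= r ^+ 2.
  rewrite /d mulrC divfK // -[r ^+ 2]real_normK ?num_real //.
  by apply: lerXn2r; rewrite ?nnegrE.
have d_le1 : 16 * d <= 1 by rewrite /d mulrC divfK // expr_le1.
have key : (2 + r) * d <= r ^+ 2 / 2.
  by have [r6|r6] := leP r 6; rewrite expr2 in d_le_r2 *; nra.
have lin := expR_ge1Dx (r / 2 - d).
have split_exp : expR (- d) = expR (r / 2 - d) * expR (- (r / 2)).
  by rewrite -expRD; congr expR; ring.
rewrite split_exp mulrAC; apply: ler_wpM2r; first exact: expR_ge0.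
by rewrite expr2 in key; nra.
Qed.

End elementary_inequalities.

Lemma le_derive1_of_quotients (R : realType) (f : R -> R) (t h c : R) :
  derivable f t 1 ->
  (forall l, 0 < l -> l <= 1 -> c <= (f (l * h + t) - f t) / l) ->
  c <= h * derive1 f t.
Proof.
move=> df quot_lb.
have dfh : derivable f t h by apply: diff_derivable; apply/derivable1_diffP.
have -> : h * derive1 f t = 'D_h f t.
  rewrite derive1E !deriveE; try exact/derivable1_diffP.
  by rewrite -{2}[h]mulr1 -[h * 1]/(h *: 1) linearZ.
have quot_cvg : (fun l => l^-1 *: ((f \o shift t) (l *: h) - f t)) @ 0^'+ --> 'D_h f t.
  apply: cvg_trans; last exact: dfh.
  by apply: cvg_app; apply: within_subset => u /= u0; exact: lt0r_neq0.
rewrite -(cvg_lim _ quot_cvg) //; apply: limr_ge; first by apply/cvg_ex; exists ('D_h f t).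
near=> l; rewrite /= -[_ *: (_ - _)]/(_ * _) -[l *: h]/(l * h) mulrC; apply: quot_lb.
  by near: l; exact: nbhs_right_gt.
by apply: ltW; near: l; apply: nbhs_right_lt; exact: ltr01.
Unshelve. all: end_near.
Qed.

Section log_concave_tangent.
Variables (R : realType) (f : R -> R) (t0 : R).
Hypotheses (f_ge0 : forall x, 0 <= x -> 0 <= f x) (lcf : log_concave_on_nonneg f).
Hypotheses (t0_gt0 : 0 < t0) (ft0_gt0 : 0 < f t0) (df : derivable f t0 1).

Lemma ln_le_tangent x : 0 <= x -> 0 < f x ->
  ln (f x) <= ln (f t0) + derive1 f t0 / f t0 * (x - t0).
Proof.
move=> x0 fx_gt0; set D := ln (f x) - ln (f t0).
suff : f t0 * D <= (x - t0) * derive1 f t0.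
  by move=> slope_bound; rewrite -lerBlDl -/D mulrAC ler_pdivlMr //; lra.
(* Log-concavity and [1 + y <= expR y] bound every right difference quotient of f at t0 in
   the direction x - t0 from below by f t0 * D. *)
apply: (le_derive1_of_quotients df) => l l0 l1.
have := lcf x0 (ltW t0_gt0) (ltW l0) l1.
rewrite (_ : l * x + (1 - l) * t0 = l * (x - t0) + t0); last by ring.
rewrite /powR !gt_eqF // -expRD.
rewrite (_ : l * ln (f x) + (1 - l) * ln (f t0) = l * D + ln (f t0)); last by rewrite /D; ring.
rewrite expRD lnK ?posrE // => conv.
have : f t0 * (1 + l * D) <= f (l * (x - t0) + t0).
  apply: le_trans conv; rewrite [leRHS]mulrC; apply: ler_wpM2l; [exact: ltW | exact: expR_ge1Dx].
by rewrite ler_pdivlMr //; nra.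
Qed.

Lemma le_tangent x : 0 <= x -> f x <= f t0 * expR (derive1 f t0 / f t0 * (x - t0)).
Proof.
move=> x0; have [fx0|fx_gt0] := eqVneq (f x) 0.
  by rewrite fx0; apply: mulr_ge0; [exact: ltW|exact: expR_ge0].
have {fx_gt0}fx_gt0 : 0 < f x by rewrite lt_neqAle eq_sym fx_gt0 f_ge0.
have := ln_le_tangent x0 fx_gt0.
by rewrite -ler_expR lnK ?posrE // expRD lnK ?posrE.
Qed.

Lemma le_midpoint x : 0 <= x ->
  f x <= f ((x + t0) / 2) * expR (derive1 f t0 / f t0 * (x - t0) / 2).
Proof.
move=> x0; have m0 : 0 <= (x + t0) / 2 by have := ltW t0_gt0; lra.
have [fx0|fx_gt0] := eqVneq (f x) 0.
  by rewrite fx0; apply: mulr_ge0; [exact: f_ge0|exact: expR_ge0].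
have {fx_gt0}fx_gt0 : 0 < f x by rewrite lt_neqAle eq_sym fx_gt0 f_ge0.
have half0 : (0 : R) <= 1 / 2 by lra.
have half1 : (1 / 2 : R) <= 1 by lra.
have := lcf x0 (ltW t0_gt0) half0 half1.
rewrite (_ : 1 / 2 * x + (1 - 1 / 2) * t0 = (x + t0) / 2); last by field.
rewrite /powR !gt_eqF // -expRD => mid.
apply: le_trans (ler_wpM2r (expR_ge0 _) mid).
rewrite -expRD -{1}(lnK fx_gt0) ler_expR.
have := ln_le_tangent x0 fx_gt0; lra.
Qed.

End log_concave_tangent.

Lemma onemM_sum_le (R : realType) (x y : \bar R) (c : R) :
  (0 <= x)%E -> (0 <= y)%E -> (x + y < +oo)%E -> (y <= c%:E * (x + y))%E ->
  ((1 - c)%:E * (x + y) <= x)%E.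
Proof.
move=> x0 y0 xy_lty.
have xfin : x \is a fin_num by rewrite ge0_fin_numE // (le_lt_trans _ xy_lty) ?leeDl.
have yfin : y \is a fin_num by rewrite ge0_fin_numE // (le_lt_trans _ xy_lty) ?leeDr.
rewrite -(fineK xfin) -(fineK yfin) -EFinD -!EFinM !lee_fin; lra.
Qed.

Section integrals_on_half_line.
Variable R : realType.
Local Notation mu := (@lebesgue_measure R).

Lemma within_itvcy_continuous_exprnM (f : R -> R) (a : R) (k : nat) :
  {within `[a, +oo[, continuous f} ->
  {within `[a, +oo[, continuous (fun x => x ^+ k * f x)}.
Proof.
move=> /continuous_within_itvcyP[cf cfa]; apply/continuous_within_itvcyP; split.
  by move=> x ax; apply: cvgM; [exact: exprn_continuous|exact: cf].
by apply: cvgM => //; apply: cvg_at_right_filter; exact: exprn_continuous.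
Qed.

Lemma ge0_integral_itvcy_expR_lty (h : R -> R) (K r : R) : 0 < r ->
  measurable_fun (`[0, +oo[ : set R) h ->
  (forall x, 0 <= x -> 0 <= h x <= K * expR (- (r * x))) ->
  (\int[mu]_(x in `[0%R, +oo[) (h x)%:E < +oo)%E.
Proof.
move=> r_gt0 mh h_le.
have K0 : 0 <= K.
  by have /andP[h0 +] := h_le 0 (lexx 0); rewrite mulr0 oppr0 expR0 mulr1; exact: le_trans.
have x0 (x : R) : `[0, +oo[%classic x -> 0 <= x by rewrite /= in_itv /= andbT.
have mpdf := @measurable_exponential_pdf R r.
apply: (@le_lt_trans _ _ (\int[mu]_(x in `[0%R, +oo[) ((K / r)%:E * (exponential_pdf r x)%:E))%E).
  apply: ge0_le_integral => //.
  - by move=> x /x0 /h_le /andP[].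
  - exact/measurable_EFinP.
  - apply/measurable_EFinP; apply: measurable_funM => //.
    exact: measurable_funS mpdf.
  - move=> x /x0 x_ge0; rewrite -EFinM lee_fin exponential_pdfE //.
    by rewrite mulrA divfK ?gt_eqF // mulNr; have /andP[] := h_le x x_ge0.
rewrite ge0_integralZl_EFin //; first last.
- exact: divr_ge0 (ltW r_gt0).
- by apply/measurable_EFinP; exact: measurable_funS mpdf.
- by move=> x _; rewrite lee_fin exponential_pdf_ge0 // ltW.
apply: (@le_lt_trans _ _ ((K / r)%:E * \int[mu]_x (exponential_pdf r x)%:E))%E.
  apply: lee_wpmul2l; first by rewrite lee_fin divr_ge0 // ltW.
  apply: ge0_subset_integral => //; first exact/measurable_EFinP.
  by move=> x _; rewrite lee_fin exponential_pdf_ge0 // ltW.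
by rewrite integral_exponential_pdf // mule1 ltry.
Qed.

Lemma ge0_integral_itvcy_affine (G : R -> R) (a b : R) : 0 < a ->
  {within `[b, +oo[, continuous G} -> (forall x, b < x -> 0 <= G x) ->
  (\int[mu]_(x in `[b, +oo[) (G x)%:E =
   \int[mu]_(x in `[0%R, +oo[) (G (a * x + b) * a)%:E)%E.
Proof.
move=> a_gt0 cG G0; set F := fun y => a * y + b.
have dF (x : R) : is_derive x 1 F a.
  by apply: is_derive_eq; rewrite addr0 -[RHS]mulr1.
have F'E : derive1 F = cst a by apply/funext => x; rewrite derive1E derive_val.
have bE : b = F 0 by rewrite /F mulr0 add0r.
rewrite bE increasing_ge0_integration_by_substitutiony -?bE //.
- by apply: eq_integral => x _; rewrite F'E.
- by move=> x y _ _ xy; rewrite /F ltrD2r ltr_pM2l.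
- by rewrite F'E => x _; exact: cst_continuous.
- by rewrite F'E; exact: is_cvg_cst.
- by rewrite F'E; exact: is_cvg_cst.
- split; first by move=> x _; exact: (dF x).(ex_derive).
  apply: cvg_at_right_filter; apply: differentiable_continuous.
  exact/derivable1_diffP/(dF 0).(ex_derive).
- apply/cvgryPge => A; near=> x.
  rewrite /F -lerBlDr -ler_pdivrMl //.
- by move=> x; rewrite in_itv /= andbT; exact: G0.
Unshelve. all: end_near.
Qed.

Lemma measurable_fun_midpoint (g : R -> R) (t0 : R) : 0 <= t0 ->
  measurable_fun (`[0, +oo[ : set R) g ->
  measurable_fun (`[0, +oo[ : set R) (fun x => g ((x + t0) / 2)).
Proof.
move=> t0_ge0 mg; set I := (`[0, +oo[%classic : set R).
apply: (@measurable_comp _ _ _ _ _ _ I g I (fun x => (x + t0) / 2)) => //.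
- exact: measurable_itv.
- by move=> _ [x + <-]; rewrite /I /= !in_itv /= !andbT => x0; lra.
- by apply: measurable_funM => //; apply: measurable_funD.
Qed.

Lemma ge0_integral_midpoint_le (g : R -> R) (t0 : R) : 0 <= t0 ->
  {within `[0, +oo[, continuous g} -> (forall x, 0 <= x -> 0 <= g x) ->
  (\int[mu]_(x in `[0%R, +oo[) (g ((x + t0) / 2))%:E <=
   2%:E * \int[mu]_(x in `[0%R, +oo[) (g x)%:E)%E.
Proof.
move=> t0_ge0 cg g0; set I := (`[0, +oo[%classic : set R).
have mI : measurable I by exact: measurable_itv.
have inI x : I x -> 0 <= x by rewrite /I /= in_itv /= andbT.
have mg : measurable_fun I g by exact: subspace_continuous_measurable_fun.
have mgm := measurable_fun_midpoint t0_ge0 mg.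
have -> : (\int[mu]_(x in I) (g ((x + t0) / 2))%:E =
           2%:E * \int[mu]_(x in `[(t0 / 2)%R, +oo[) (g x)%:E)%E.
  rewrite (ge0_integral_itvcy_affine (a := 1 / 2) (b := t0 / 2)); last 3 first.
  - by lra.
  - by apply: continuous_subspaceW cg => x; rewrite /= !in_itv /= !andbT => ?; lra.
  - by move=> x tx; apply: g0; lra.
  have -> : (\int[mu]_(x in `[0%R, +oo[) (g (1 / 2 * x + t0 / 2) * (1 / 2))%:E =
             \int[mu]_(x in I) (2^-1%:E * (g ((x + t0) / 2))%:E))%E.
    by apply: eq_integral => x _; rewrite -EFinM mulrC; congr (_ * g _)%:E; field.
  rewrite ge0_integralZl_EFin //; last 2 first.
  - by move=> x /inI x0; rewrite lee_fin g0 //; lra.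
  - exact/measurable_EFinP.
  by rewrite muleA -EFinM divff // mul1e.
apply: lee_wpmul2l => //; apply: ge0_subset_integral => //.
- exact/measurable_EFinP.
- by move=> x /inI x0; rewrite lee_fin g0.
- by move=> x; rewrite /I /= !in_itv /= !andbT => ?; lra.
Qed.

End integrals_on_half_line.

Section moment_bounds.
Variables (R : realType) (f : R -> R) (t0 : R) (k : nat).
Local Notation mu := (@lebesgue_measure R).
Hypotheses (f_ge0 : forall x, 0 <= x -> 0 <= f x) (lcf : log_concave_on_nonneg f).
Hypotheses (t0_gt0 : 0 < t0) (ft0_gt0 : 0 < f t0) (df : derivable f t0 1).
Hypothesis logderiv : derive1 f t0 / f t0 = - k%:R / t0.

Lemma moment_le_midpoint (eps x : R) : 0 <= eps <= 1 -> 0 <= x -> eps * t0 <= `|x - t0| ->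
  x ^+ k * f x <=
  expR (- (eps ^+ 2 / 16)) ^+ k * (((x + t0) / 2) ^+ k * f ((x + t0) / 2)).
Proof.
move=> eps01 x0 far; set m := (x + t0) / 2; set r := (x - t0) / t0.
have m0 : 0 <= m by rewrite /m; have := ltW t0_gt0; lra.
have mid := le_midpoint f_ge0 lcf t0_gt0 ft0_gt0 df x0.
rewrite logderiv -/m (_ : _ / 2 = k%:R * - (r / 2)) ?expRM_natl in mid; last first.
  by rewrite /r; field; rewrite gt_eqF.
have contraction : x * expR (- (r / 2)) <= expR (- (eps ^+ 2 / 16)) * m.
  have -> : x = t0 * (1 + r) by rewrite /r; field; rewrite gt_eqF.
  rewrite (_ : m = t0 * (1 + r / 2)); last by rewrite /m /r; field; rewrite gt_eqF.
  rewrite -mulrA [leRHS]mulrCA; apply: ler_wpM2l; first exact: ltW.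
  apply: window_contraction => //.
    by rewrite /r ler_pdivlMr // mulN1r; lra.
  by rewrite /r normrM normfV (gtr0_norm t0_gt0) ler_pdivlMr.
apply: le_trans (_ : x ^+ k * (f m * expR (- (r / 2)) ^+ k) <= _).
  by apply: ler_wpM2l => //; exact: exprn_ge0.
rewrite mulrCA -exprMn mulrA -exprMn [leRHS]mulrC; apply: ler_wpM2l; first exact: f_ge0.
by apply: lerXn2r; rewrite // nnegrE mulr_ge0 ?expR_ge0.
Qed.

Lemma moment_le_expR x : (0 < k)%N -> 0 <= x ->
  x ^+ k * f x <= f t0 * t0 ^+ k * expR 1 * expR (- ((2 * t0)^-1 * x)).
Proof.
move=> k_gt0 x0; set s := x / t0.
have s0 : 0 <= s by rewrite divr_ge0 // ltW.
have tan := le_tangent f_ge0 lcf t0_gt0 ft0_gt0 df x0.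
rewrite logderiv (_ : _ * (x - t0) = k%:R * (1 - s)) ?expRM_natl in tan; last first.
  by rewrite /s; field; rewrite gt_eqF.
apply: le_trans (_ : x ^+ k * (f t0 * expR (1 - s) ^+ k) <= _).
  by apply: ler_wpM2l => //; exact: exprn_ge0.
have -> : x ^+ k * (f t0 * expR (1 - s) ^+ k) = f t0 * t0 ^+ k * (s * expR (1 - s)) ^+ k.
  rewrite {1}(_ : x = t0 * s); last by rewrite /s; field; rewrite gt_eqF.
  by rewrite !exprMn; ring.
rewrite -[leRHS]mulrA; apply: ler_wpM2l; first by rewrite mulr_ge0 ?exprn_ge0 // ltW.
apply: le_trans (ler_iXnr k_gt0 _ (mulr_expR1B_le1 s)) _; first by rewrite mulr_ge0 ?expR_ge0.
apply: le_trans (ler_wpM2r (expR_ge0 _) (ler_expR_half s0)) _.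
by rewrite -!expRD (_ : _ + _ = 1 + - ((2 * t0)^-1 * x)) // /s; field; rewrite gt_eqF.
Qed.

Lemma moment_integral_lty : (0 < k)%N -> {within `[0, +oo[, continuous f} ->
  (\int[mu]_(x in `[0%R, +oo[) (x ^+ k * f x)%:E < +oo)%E.
Proof.
move=> k_gt0 cf.
apply: (ge0_integral_itvcy_expR_lty (K := f t0 * t0 ^+ k * expR 1) (r := (2 * t0)^-1)).
- by rewrite invr_gt0 mulr_gt0.
- apply: subspace_continuous_measurable_fun; first exact: measurable_itv.
  exact: within_itvcy_continuous_exprnM.
- by move=> x x0; rewrite mulr_ge0 ?exprn_ge0 ?f_ge0 //= moment_le_expR.
Qed.

Lemma off_window_moment_le (eps : R) : 0 <= eps <= 1 -> {within `[0, +oo[, continuous f} ->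
  (\int[mu]_(x in `[0%R, +oo[ `\` `[(t0 * (1 - eps))%R, (t0 * (1 + eps))%R])
      (x ^+ k * f x)%:E <=
   (2 * expR (- (eps ^+ 2 / 16)) ^+ k)%:E *
      \int[mu]_(x in `[0%R, +oo[) (x ^+ k * f x)%:E)%E.
Proof.
move=> eps01 cf; set c := expR (- (eps ^+ 2 / 16)) ^+ k.
set I := (`[0, +oo[%classic : set R).
set O := I `\` `[t0 * (1 - eps), t0 * (1 + eps)]%classic.
have mI : measurable I by exact: measurable_itv.
have mO : measurable O by apply: measurableD => //; exact: measurable_itv.
have OI : O `<=` I by move=> x [].
have inI x : I x -> 0 <= x by rewrite /I /= in_itv /= andbT.
have g0 x : 0 <= x -> 0 <= x ^+ k * f x by move=> x0; rewrite mulr_ge0 ?exprn_ge0 ?f_ge0.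
have c0 : 0 <= c by rewrite exprn_ge0 ?expR_ge0.
have cg := within_itvcy_continuous_exprnM (k := k) cf.
have mg : measurable_fun I (fun x => x ^+ k * f x) by exact: subspace_continuous_measurable_fun.
have mcgm : measurable_fun I (fun x => c * (((x + t0) / 2) ^+ k * f ((x + t0) / 2))).
  by apply: measurable_funM => //; exact: measurable_fun_midpoint (ltW t0_gt0) mg.
have cgm_ge0 x : I x -> 0 <= c * (((x + t0) / 2) ^+ k * f ((x + t0) / 2)).
  by move=> /inI x0; rewrite mulr_ge0 // g0 //; have := ltW t0_gt0; lra.
apply: (@le_trans _ _ (\int[mu]_(x in O) (c * (((x + t0) / 2) ^+ k * f ((x + t0) / 2)))%:E)%E).
  apply: ge0_le_integral => //.
  - by move=> x [/inI x0 _]; rewrite lee_fin g0.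
  - by apply/measurable_EFinP; exact: measurable_funS mI OI mg.
  - by apply/measurable_EFinP; exact: measurable_funS mI OI mcgm.
  move=> x [/inI x0 out]; rewrite lee_fin; apply: moment_le_midpoint => //.
  move: out; rewrite /= in_itv /= => /negP; rewrite negb_and -!ltNge ler_normr.
  by case/orP => ?; apply/orP; [right|left]; lra.
apply: (@le_trans _ _ (\int[mu]_(x in I) (c * (((x + t0) / 2) ^+ k * f ((x + t0) / 2)))%:E)%E).
  apply: (ge0_subset_integral mu mO mI); first exact/measurable_EFinP.
  - by move=> x /cgm_ge0; rewrite lee_fin.
  - exact: OI.
under eq_integral do rewrite EFinM.
rewrite ge0_integralZl_EFin //; last 2 first.
- by move=> x /inI x0; rewrite lee_fin g0 //; have := ltW t0_gt0; lra.
- by apply/measurable_EFinP; exact: measurable_fun_midpoint (ltW t0_gt0) mg.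
rewrite mulrC EFinM -muleA; apply: lee_wpmul2l; first by rewrite lee_fin.
by apply: ge0_integral_midpoint_le => //; exact: ltW.
Qed.

Lemma window_moment_ge (eps : R) : (0 < k)%N -> 0 <= eps <= 1 ->
  {within `[0, +oo[, continuous f} ->
  ((1 - 2 * expR (- (eps ^+ 2 / 16)) ^+ k)%:E *
      \int[mu]_(x in `[0%R, +oo[) (x ^+ k * f x)%:E <=
   \int[mu]_(x in `[(t0 * (1 - eps))%R, (t0 * (1 + eps))%R]) (x ^+ k * f x)%:E)%E.
Proof.
move=> k_gt0 eps01 cf.
set I := (`[0, +oo[%classic : set R).
set J := (`[t0 * (1 - eps), t0 * (1 + eps)]%classic : set R).
have mI : measurable I by exact: measurable_itv.
have mJ : measurable J by exact: measurable_itv.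
have inI x : I x -> 0 <= x by rewrite /I /= in_itv /= andbT.
have JI : J `<=` I.
  move=> x; rewrite /J /I /= !in_itv /= andbT => /andP[+ _]; apply: le_trans.
  by have /andP[_ eps1] := eps01; rewrite mulr_ge0 ?subr_ge0 // ltW.
have g0 x : I x -> (0 <= (x ^+ k * f x)%:E)%E.
  by move=> /inI x0; rewrite lee_fin mulr_ge0 ?exprn_ge0 ?f_ge0.
have mg : measurable_fun I (fun x => x ^+ k * f x).
  exact: subspace_continuous_measurable_fun (within_itvcy_continuous_exprnM _).
have split : (\int[mu]_(x in I) (x ^+ k * f x)%:E =
    \int[mu]_(x in J) (x ^+ k * f x)%:E + \int[mu]_(x in I `\` J) (x ^+ k * f x)%:E)%E.
  rewrite -{1}(setDUK JI) ge0_integral_setU //; first exact: measurableD.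
  - by rewrite (setDUK JI); exact/measurable_EFinP.
  - by move=> x [/JI/g0 | [/g0]].
  - by apply/disj_setPS => x [Jx [_ /(_ Jx)]].
rewrite split; apply: onemM_sum_le.
- by apply: integral_ge0 => x /JI; exact: g0.
- by apply: integral_ge0 => x [/g0].
- by rewrite -split; exact: moment_integral_lty.
- by rewrite -split; exact: off_window_moment_le.
Qed.

End moment_bounds.

Theorem lemma4p5 (R : realType) :
  exists C c : R, 1 < C /\ 0 < c /\ c < 1 /\
  forall (n : nat) (f : R -> R) (tn eps : R),
    (2 <= n)%N ->
    (forall x, 0 <= x -> 0 <= f x) ->
    {within `[0%R, +oo[, continuous f} ->
    log_concave_on_nonneg f ->
    (forall x, 0 < x ->
       [/\ derivable f x 1, derivable (derive1 f) x 1 & {for x, continuous (derive1 (derive1 f))}]) ->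
    (0 < \int[@lebesgue_measure R]_(t in `[0%R, +oo[) (f t)%:E)%E ->
    (\int[@lebesgue_measure R]_(t in `[0%R, +oo[) (f t)%:E < +oo)%E ->
    is_t_p n%:R f tn ->
    0 <= eps -> eps <= 1 ->
    (((1 - C * expR (- c * eps ^+ 2 * n%:R))%:E *
       \int[@lebesgue_measure R]_(t in `[0%R, +oo[) (t ^+ n.-1 * f t)%:E)
     <= \int[@lebesgue_measure R]_(t in `[(tn * (1 - eps))%R, (tn * (1 + eps))%R])
          (t ^+ n.-1 * f t)%:E)%E.
Proof.
exists 2, (1 / 32); do 3 (split; first lra).
move=> n f tn eps n_ge2 f_ge0 cf lcf smooth _ _ [tn_gt0 [ftn_gt0 logderiv]] eps0 eps1.
have [dftn _ _] := smooth tn tn_gt0.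
have k_gt0 : (0 < n.-1)%N by rewrite -subn1 subn_gt0.
have nE : n%:R = (n.-1)%:R + 1 :> R by rewrite natr1 prednK // (ltn_trans _ n_ge2).
have {}logderiv : derive1 f tn / f tn = - (n.-1)%:R / tn by rewrite logderiv nE addrK.
have eps01 : 0 <= eps <= 1 by rewrite eps0 eps1.
apply: le_trans (window_moment_ge f_ge0 lcf tn_gt0 ftn_gt0 dftn logderiv k_gt0 eps01 cf).
apply: lee_wpmul2r.
  apply: integral_ge0 => x; rewrite /= in_itv /= andbT => x0.
  by rewrite lee_fin mulr_ge0 ?exprn_ge0 ?f_ge0.
rewrite lee_fin lerD2l lerN2 ler_pM2l // -expRM_natl ler_expR.
have : (1 : R) <= (n.-1)%:R by rewrite ler1n.
by have := sqr_ge0 eps; rewrite nE; nra.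
Qed.
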